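(* Let $0\le\alpha<\pi/2$ and let $H\in\mathbb{M}_n(\mathbb{M}_k)$ satisfy $W(H)\subseteq S_\alpha$. Then \[ \left|\frac{\det(\mathrm{tr}_1 H)}{n^k}\right|^n \ge (\cos\alpha)^{nk}\,|\det H|. \]
   Context: $\mathbb{M}_n(\mathbb{M}_k)$ denotes the set of $nk\times nk$ complex matrices partitioned as $H=[H_{i,j}]_{i,j=1}^n$ with each block $H_{i,j}$ a $k\times k$ complex matrix. The first partial trace is $\mathrm{tr}_1 H=\sum_{i=1}^n H_{i,i}\in\mathbb{M}_k$. The numerical range of $A\in\mathbb{M}_p$ is $W(A)=\{x^*Ax: x\in\mathbb{C}^p, x^*x=1\}$. For $\alpha\in[0,\pi/2)$, $S_\alpha=\{z\in\mathbb{C}: \Re z>0,\ |\Im z|\le (\Re z)\tan\alpha\}$. *)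

(* Complex matrices are taken over an arbitrary
   numClosedFieldType C (algebraically closed field with conjugation,
   e.g. the complex numbers). *)
From HB Require Import structures.
From mathcomp Require Import all_boot all_order all_algebra.
Set Implicit Arguments. Unset Strict Implicit. Unset Printing Implicit Defensive.
Import Order.TTheory GRing.Theory Num.Theory.
Local Open Scope ring_scope.

Lemma blk_proof (n k : nat) (i : 'I_n) (a : 'I_k) : (i * k + a < n * k)%N.
Proof.
have hi := ltn_ord i; have ha := ltn_ord a.
apply: (@leq_trans (i * k + k)%N); first by rewrite ltn_add2l.
by rewrite addnC -mulSn leq_mul2r hi orbT.
Qed.

(* index of entry (a) of block (i) in the flat 'I_(n*k) indexing:
   block i occupies rows/columns i*k, ..., i*k + k - 1 *)
Definition blk (n k : nat) (i : 'I_n) (a : 'I_k) : 'I_(n * k) :=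
  Ordinal (blk_proof i a).

Definition ptrace1 (C : numClosedFieldType) (n k : nat) (H : 'M[C]_(n * k))
  : 'M[C]_k :=
  \matrix_(a < k, b < k) \sum_(i < n) H (blk i a) (blk i b).

Definition adjmx (C : numClosedFieldType) (p q : nat) (A : 'M[C]_(p, q))
  : 'M[C]_(q, p) := (map_mx Num.conj A)^T.

Definition numrange (C : numClosedFieldType) (p : nat) (A : 'M[C]_p)
  : C -> Prop :=
  fun z => exists x : 'cV[C]_p,
    adjmx x *m x = 1%:M /\ z = (adjmx x *m A *m x) ord0 ord0.

(* sector S_alpha, with alpha in [0, pi/2) encoded by c = cos alpha,
   s = sin alpha:  Re z > 0 and |Im z| <= (Re z) tan alpha,
   i.e. |Im z| * c <= (Re z) * s. *)
Definition sector (C : numClosedFieldType) (c s : C) (z : C) : Prop :=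
  0 < 'Re z /\ `|'Im z| * c <= 'Re z * s.

(* (c, s) = (cos alpha, sin alpha) for some alpha in [0, pi/2) *)
Definition angle_cs (C : numClosedFieldType) (c s : C) : Prop :=
  c \is Num.real /\ s \is Num.real /\ 0 < c /\ 0 <= s /\ c ^+ 2 + s ^+ 2 = 1.

(* Put G = tr_1 H / n and let T be its Hermitian part, which is positive definite
   because W(G) lies in the sector.  Every eigenvalue of T^-1 G has real part 1,
   so |det T| <= |det G|.  The eigenvalues of (I_n (x) T)^-1 H are generalized
   Rayleigh quotients of H, hence lie in the sector and satisfy c |d| <= Re d;
   their real parts add up to Re tr (T^-1 tr_1 H) = nk.  The AM-GM inequality
   then gives c^(nk) |det H| <= det (I_n (x) T) = |det T|^n <= |det G|^n. *)

From HB Require Import structures.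
From mathcomp Require Import all_boot all_order all_algebra.
From mathcomp Require Import ring mxtens.
Import Order.TTheory GRing.Theory Num.Theory.
Local Open Scope ring_scope.

Set Implicit Arguments. Unset Strict Implicit. Unset Printing Implicit Defensive.

Lemma det_similar (R : comUnitRingType) m (A Ai B : 'M[R]_m) :
  Ai *m A = 1%:M -> \det (Ai *m B *m A) = \det B.
Proof. by move=> AiA; rewrite !det_mulmx mulrAC -det_mulmx AiA det1 mul1r. Qed.

Lemma det_dim0 (R : comPzRingType) m (A : 'M[R]_m) : m = 0%N -> \det A = 1.
Proof. by move=> m0; move: A; rewrite m0 => A; rewrite det_mx00. Qed.

Lemma eigen_decomp (C : numClosedFieldType) m (M : 'M[C]_m) :
  exists d : 'I_m -> C,
    [/\ \det M = \prod_i d i, \tr M = \sum_i d i & forall i, eigenvalue M (d i)].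
Proof.
case: m M => [|m] M.
  by exists (fun _ => 0); rewrite det_mx00 /mxtrace !big_ord0; split=> // -[].
have [P P_unitary U_trig] := Schur M (ltn0Sn m).
have P_unit := unitarymx_unit P_unitary.
have UE : conjmx P M = P *m M *m invmx P by rewrite conjumx.
exists (fun i => conjmx P M i i); split.
- by rewrite -det_trig // UE det_similar ?mulmxV.
- by rewrite -[RHS]/(\tr (conjmx P M)) UE mxtrace_mulC mulmxA mulVmx // mul1mx.
- move=> i; apply: (eigenvalue_conjmx (V := P)).
  + by rewrite stablemx_unit.
  + by rewrite row_free_unit.
  change (eigenvalue (conjmx P M) (conjmx P M i i)).
  rewrite eigenvalue_root_char char_poly_trig //; apply/rootP.
  rewrite horner_prod; apply/eqP; rewrite prodf_seq_eq0.
  by apply/hasP; exists i; rewrite ?mem_index_enum //= hornerXsubC subrr.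
Qed.

Section Sector.
Variables (C : numClosedFieldType) (c s : C).

Lemma sector_scale r z : 0 < r -> sector c s z -> sector c s (r * z).
Proof.
move=> r_gt0 [Rez_gt0 Imz_le]; have rR : r \is Num.real by rewrite gtr0_real.
split; first by rewrite ReMl // mulr_gt0.
by rewrite ReMl // ImMl // normrM (gtr0_norm r_gt0) -!mulrA ler_pM2l.
Qed.

Hypothesis cs_angle : angle_cs c s.

Lemma sector_add z w : sector c s z -> sector c s w -> sector c s (z + w).
Proof.
move=> [Rez_gt0 Imz_le] [Rew_gt0 Imw_le]; have [_ [_ [c_gt0 _]]] := cs_angle.
split; first by rewrite raddfD addr_gt0.
rewrite !raddfD mulrDl; apply: le_trans (lerD Imz_le Imw_le).
by rewrite -mulrDl; apply: ler_wpM2r; [exact: ltW | exact: ler_normD].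
Qed.

Lemma sector_sum m (F : 'I_m -> C) :
  (0 < m)%N -> (forall i, sector c s (F i)) -> sector c s (\sum_i F i).
Proof.
case: m F => // m F _; elim: m F => [|m IHm] F secF; first by rewrite big_ord1.
by rewrite big_ord_recr; apply: sector_add => //; apply: IHm.
Qed.

(* Squared, |Im z| c <= Re z s reads c^2 |z|^2 <= (c^2 + s^2) (Re z)^2 = (Re z)^2. *)
Lemma sector_norm_le z : sector c s z -> c * `|z| <= 'Re z.
Proof.
move=> [Rez_gt0 Imz_le]; have [cR [sR [c_gt0 [s_ge0 cs1]]]] := cs_angle.
have ReR := Creal_Re z; have ImR := Creal_Im z.
rewrite -(@ler_pXn2r _ 2) // ?nnegrE; last 2 first.
- exact: mulr_ge0 (ltW c_gt0) (normr_ge0 z).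
- exact: ltW.
rewrite exprMn normC2_Re_Im mulrDr.
have Im2_le : 'Im z ^+ 2 * c ^+ 2 <= 'Re z ^+ 2 * s ^+ 2.
  by rewrite -real_normK // -!exprMn ler_pXn2r // nnegrE mulr_ge0 // ltW.
have Re2s2E : 'Re z ^+ 2 * s ^+ 2 = 'Re z ^+ 2 - c ^+ 2 * 'Re z ^+ 2.
  by rewrite -[X in X - _]mulr1 -cs1; ring.
by rewrite -lerBrDl mulrC -Re2s2E.
Qed.

Lemma sector_det_le m (M : 'M[C]_m) :
  (forall a, eigenvalue M a -> sector c s a) ->
  c ^+ m * `|\det M| <= ('Re (\tr M) / m%:R) ^+ m.
Proof.
move=> secM; have [d [-> -> eig_d]] := eigen_decomp M.
have sec_d i : sector c s (d i) := secM _ (eig_d i).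
have [_ [_ [c_gt0 _]]] := cs_angle.
rewrite normr_prod -[in c ^+ m](card_ord m) -prodr_const -big_split /=.
apply: (@le_trans _ _ (\prod_i 'Re (d i))).
  apply: ler_prod => i _; rewrite mulr_ge0 ?normr_ge0 ?(ltW c_gt0) //=.
  exact: sector_norm_le.
have [AGM _] := @leif_AGM _ _ predT (fun i => 'Re (d i)) (fun i _ => ltW (sec_d i).1).
by move: AGM; rewrite raddf_sum card_ord.
Qed.

End Sector.

Section QuadraticForm.
Variable C : numClosedFieldType.

Lemma adjmxZ m n a (A : 'M[C]_(m, n)) : adjmx (a *: A) = a^* *: adjmx A.
Proof. by apply/matrixP => i j; rewrite !mxE rmorphM. Qed.

Lemma adjmxK m n (A : 'M[C]_(m, n)) : adjmx (adjmx A) = A.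
Proof. by apply/matrixP => i j; rewrite !mxE conjCK. Qed.

Definition qform m (M : 'M[C]_m) (u : 'rV[C]_m) : C := (u *m M *m adjmx u) 0 0.

Definition posdef m (M : 'M[C]_m) := forall u : 'rV[C]_m, u != 0 -> 0 < qform M u.

Definition hermpart m (M : 'M[C]_m) := 2^-1 *: (M + adjmx M).

Variable m : nat.
Implicit Types (G M N T : 'M[C]_m) (u : 'rV[C]_m).

Lemma qformE M u : qform M u = \sum_i \sum_j u 0 i * M i j * (u 0 j)^*.
Proof.
rewrite /qform mxE exchange_big /=; apply: eq_bigr => j _.
by rewrite !mxE big_distrl /=; apply: eq_bigr => i _.
Qed.

Lemma qform0 M : qform M 0 = 0.
Proof. by rewrite /qform !mul0mx mxE. Qed.

Lemma qformZ a M u : qform (a *: M) u = a * qform M u.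
Proof. by rewrite /qform -scalemxAr -scalemxAl mxE. Qed.

Lemma qformD M N u : qform (M + N) u = qform M u + qform N u.
Proof. by rewrite /qform mulmxDr mulmxDl mxE. Qed.

Lemma qform_adjmx M u : qform (adjmx M) u = (qform M u)^*.
Proof.
rewrite !qformE rmorph_sum exchange_big; apply: eq_bigr => i _.
rewrite rmorph_sum; apply: eq_bigr => j _.
by rewrite !mxE !rmorphM /= conjCK; ring.
Qed.

Lemma qform_hermpart M u : qform (hermpart M) u = 'Re (qform M u).
Proof. by rewrite qformZ qformD qform_adjmx ReE mulrC. Qed.

Lemma qform_eigen M N u a : u *m M = a *: (u *m N) -> qform M u = a * qform N u.
Proof. by rewrite /qform => ->; rewrite -scalemxAl mxE. Qed.

Lemma qform1_gt0 u : u != 0 -> 0 < qform 1%:M u.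
Proof.
move=> u0; rewrite /qform mulmx1 mxE.
have ge0 j : 0 <= u 0 j * adjmx u j 0 by rewrite !mxE mul_conjC_ge0.
rewrite lt_def sumr_ge0 // andbT psumr_eq0 //.
apply: contra u0 => /allP u_eq0; apply/eqP/rowP => j; rewrite mxE.
have /implyP/(_ isT) := u_eq0 j (mem_index_enum j).
by rewrite !mxE mul_conjC_eq0 => /eqP.
Qed.

Lemma numrange_qform M u : u != 0 -> numrange M (qform M u / qform 1%:M u).
Proof.
move=> u0; have r_gt0 := qform1_gt0 u0; set r := qform 1%:M u in r_gt0 *.
have sqrt_gt0 : 0 < sqrtC r by rewrite sqrtC_gt0.
pose x := (sqrtC r)^-1 *: adjmx u.
have adj_x : adjmx x = (sqrtC r)^-1 *: u.
  rewrite adjmxZ adjmxK fmorphV; congr (_^-1 *: _); exact/conj_Creal/gtr0_real.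
have scale_x (A : 'M[C]_m) : adjmx x *m A *m x = r^-1 *: (u *m A *m adjmx u).
  by rewrite adj_x /x -!scalemxAl -scalemxAr scalerA -expr2 exprVn sqrtCK.
exists x; split; last by rewrite scale_x mxE mulrC.
apply/matrixP => i j; rewrite !ord1 -[adjmx x]mulmx1 scale_x mxE [RHS]mxE.
by change (r^-1 * r = (0 == 0 :> 'I_1)%:R); rewrite mulVf ?eqxx ?gt_eqF.
Qed.

Lemma posdef_qform_ge0 T u : posdef T -> 0 <= qform T u.
Proof. by have [->|u0] := eqVneq u 0; rewrite ?qform0 // => /(_ u u0)/ltW. Qed.

Lemma posdef_unitmx T : posdef T -> T \in unitmx.
Proof.
move=> posT; rewrite unitmxE unitfE; apply/negP => /det0P[u u0 uT].
by have := posT u u0; rewrite /qform uT mul0mx mxE ltxx.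
Qed.

Lemma eigenvalue_qform Ti T M a :
  Ti *m T = 1%:M -> eigenvalue (Ti *m M) a ->
  exists2 u, u != 0 & qform M u = a * qform T u.
Proof.
move=> TiT /eigenvalueP[w wM w0].
have wE : w *m Ti *m T = w by rewrite -mulmxA TiT mulmx1.
exists (w *m Ti); first by apply: contra w0 => /eqP wTi0; rewrite -wE wTi0 mul0mx.
by apply: qform_eigen; rewrite wE -wM mulmxA.
Qed.

Lemma Re_eigenvalue_hermpart G a :
  posdef (hermpart G) -> eigenvalue (invmx (hermpart G) *m G) a -> 'Re a = 1.
Proof.
move=> posG /(eigenvalue_qform (mulVmx (posdef_unitmx posG)))[u u0 Gu].
have Tu_gt0 := posG u u0; move: (congr1 (fun z => 'Re z) Gu).
rewrite -qform_hermpart ReMr ?gtr0_real // => TuE.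
by apply: (mulIf (lt0r_neq0 Tu_gt0)); rewrite mul1r -TuE.
Qed.

Lemma Re_mxtrace_hermpart G :
  posdef (hermpart G) -> 'Re (\tr (invmx (hermpart G) *m G)) = m%:R.
Proof.
move=> posG; have [d [_ -> eig_d]] := eigen_decomp (invmx (hermpart G) *m G).
rewrite raddf_sum (eq_bigr (fun=> 1)) => [|i _]; first by rewrite sumr_const card_ord.
exact: Re_eigenvalue_hermpart posG (eig_d i).
Qed.

Lemma norm_det_hermpart_le G :
  posdef (hermpart G) -> `|\det (hermpart G)| <= `|\det G|.
Proof.
move=> posG.
have detT_gt0 : 0 < `|\det (hermpart G)|.
  by rewrite normr_gt0 -unitfE -unitmxE posdef_unitmx.
have [d [detE _ eig_d]] := eigen_decomp (invmx (hermpart G) *m G).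
have : 1 <= `|\det (invmx (hermpart G) *m G)|.
  rewrite detE normr_prod.
  apply: (@le_trans _ _ (\prod_(i < m) (1 : C))); first by rewrite big1.
  apply: ler_prod => i _; rewrite ler01 /= -(Re_eigenvalue_hermpart posG (eig_d i)).
  exact: (leif_Re_Creal (d i)).1.
by rewrite det_mulmx det_inv normrM normfV ler_pdivlMl // mulr1.
Qed.

End QuadraticForm.

Section SectorialForm.
Variables (C : numClosedFieldType) (c s : C) (m : nat).

Lemma sector_qform (H : 'M[C]_m) u :
  (forall z, numrange H z -> sector c s z) -> u != 0 -> sector c s (qform H u).
Proof.
move=> WH u0; have r_gt0 := qform1_gt0 u0.
rewrite -(divfK (lt0r_neq0 r_gt0) (qform H u)) mulrC.
exact: sector_scale r_gt0 (WH _ (numrange_qform H u0)).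
Qed.

Hypothesis cs_angle : angle_cs c s.

Lemma posdef_det_sector_le (D H : 'M[C]_m) :
  posdef D -> (forall u, u != 0 -> sector c s (qform H u)) ->
  c ^+ m * `|\det H| <= `|\det D| * ('Re (\tr (invmx D *m H)) / m%:R) ^+ m.
Proof.
move=> posD secH; have D_unit := posdef_unitmx posD.
have detD_gt0 : 0 < `|\det D| by rewrite normr_gt0 -unitfE -unitmxE.
have sec_eig a : eigenvalue (invmx D *m H) a -> sector c s a.
  move/(eigenvalue_qform (mulVmx D_unit)) => [u u0 Hu].
  have Du_gt0 := posD u u0.
  have -> : a = (qform D u)^-1 * qform H u by rewrite Hu mulrC mulfK ?lt0r_neq0.
  by apply: sector_scale (secH u u0); rewrite invr_gt0.
have := sector_det_le cs_angle sec_eig.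
by rewrite det_mulmx det_inv normrM normfV mulrCA ler_pdivrMl.
Qed.

End SectorialForm.

Section PartialTrace.
Variables (C : numClosedFieldType) (n k : nat).
Local Notation blkdiag T := ((1%:M : 'M_n) *t T : 'M[C]_(n * k)).

Lemma blkE (i : 'I_n) (a : 'I_k) : blk i a = mxtens_index (i, a).
Proof. exact: val_inj. Qed.

Lemma big_blk (R : Type) (idx : R) (op : Monoid.com_law idx) (F : 'I_(n * k) -> R) :
  \big[op/idx]_l F l = \big[op/idx]_(i < n) \big[op/idx]_(a < k) F (blk i a).
Proof.
rewrite pair_big /= (reindex (fun p : 'I_n * 'I_k => blk p.1 p.2)) //.
exists (@mxtens_unindex n k) => [[i a]|l] _; first by rewrite /= blkE mxtens_indexK.
by rewrite blkE -surjective_pairing mxtens_unindexK.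
Qed.

Lemma tens1mxE (T : 'M[C]_k) i a j b :
  blkdiag T (blk i a) (blk j b) = (i == j)%:R * T a b.
Proof. by rewrite !blkE tensmxE mxE. Qed.

Lemma tens1mx1 : blkdiag 1%:M = 1%:M.
Proof.
apply/matrixP => l l'; case: (mxtens_indexP l) => i a; case: (mxtens_indexP l') => j b.
rewrite tensmxE !mxE (inj_eq (can_inj (@mxtens_indexK n k))) xpair_eqE.
by rewrite -natrM mulnb.
Qed.

Lemma tens1mxM (X Y : 'M[C]_k) : blkdiag X *m blkdiag Y = blkdiag (X *m Y).
Proof. by rewrite tensmx_mul mulmx1. Qed.

Lemma invmx_tens1mx T : T \in unitmx -> invmx (blkdiag T) = blkdiag (invmx T).
Proof.
move=> T_unit; have TiT : blkdiag (invmx T) *m blkdiag T = 1%:M.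
  by rewrite tens1mxM mulVmx // tens1mx1.
have [_ D_unit] := mulmx1_unit TiT.
by rewrite -[invmx _]mul1mx -TiT -mulmxA mulmxV ?mulmx1.
Qed.

Lemma mxtrace_tens1mxM (X : 'M[C]_k) (H : 'M[C]_(n * k)) :
  \tr (blkdiag X *m H) = \tr (X *m ptrace1 H).
Proof.
rewrite /mxtrace big_blk (eq_bigr (fun i => \sum_a \sum_b X a b * H (blk i b) (blk i a))).
  rewrite exchange_big; apply: eq_bigr => a _; rewrite mxE exchange_big.
  by apply: eq_bigr => b _; rewrite mxE mulr_sumr.
move=> i _; apply: eq_bigr => a _; rewrite mxE big_blk (big_only1 i) // => [|j ji _].
  by apply: eq_bigr => b _; rewrite tens1mxE eqxx mul1r.
by rewrite big1 // => b _; rewrite tens1mxE eq_sym (negbTE ji) !mul0r.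
Qed.

Definition blkrow (i : 'I_n) (u : 'rV[C]_(n * k)) : 'rV[C]_k := \row_a u 0 (blk i a).

Lemma qform_tens1mx T u : qform (blkdiag T) u = \sum_i qform T (blkrow i u).
Proof.
rewrite qformE big_blk; apply: eq_bigr => i _; rewrite qformE; apply: eq_bigr => a _.
rewrite big_blk (big_only1 i) // => [|j ji _].
  by apply: eq_bigr => b _; rewrite tens1mxE eqxx mul1r !mxE.
by rewrite big1 // => b _; rewrite tens1mxE eq_sym (negbTE ji) mul0r mulr0 mul0r.
Qed.

Lemma posdef_tens1mx T : posdef T -> posdef (blkdiag T).
Proof.
move=> posT u u0; rewrite qform_tens1mx.
have [i ui0] : exists i, blkrow i u != 0.
  apply/existsP; apply: contraR u0 => /existsPn rows0.
  apply/eqP/rowP => l; case: (mxtens_indexP l) => i a.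
  by have /negPn/eqP/rowP/(_ a) := rows0 i; rewrite !mxE blkE.
rewrite (bigD1 i) //=; apply: lt_le_trans (posT _ ui0) _.
by rewrite lerDl sumr_ge0 // => j _; apply: posdef_qform_ge0.
Qed.

Definition blkemb (j : 'I_n) (y : 'rV[C]_k) : 'rV[C]_(n * k) :=
  \row_l (((mxtens_unindex l).1 == j)%:R * y 0 (mxtens_unindex l).2).

Lemma blkembE j y i a : blkemb j y 0 (blk i a) = (i == j)%:R * y 0 a.
Proof. by rewrite mxE blkE mxtens_indexK. Qed.

Lemma blkemb_neq0 j y : y != 0 -> blkemb j y != 0.
Proof.
apply: contra => /eqP y0; apply/eqP/rowP => a.
by have := blkembE j y j a; rewrite y0 eqxx mul1r !mxE => <-.
Qed.

Lemma qform_blkemb H j y :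
  qform H (blkemb j y) = \sum_a \sum_b y 0 a * H (blk j a) (blk j b) * (y 0 b)^*.
Proof.
rewrite qformE big_blk (big_only1 j) // => [|i ij _]; last first.
  by rewrite big1 // => a _; rewrite big1 // => l _; rewrite blkembE (negbTE ij) !mul0r.
apply: eq_bigr => a _; rewrite big_blk (big_only1 j) // => [|i ij _]; last first.
  by rewrite big1 // => b _; rewrite (blkembE _ _ i) (negbTE ij) mul0r rmorph0 mulr0.
by apply: eq_bigr => b _; rewrite !blkembE eqxx !mul1r.
Qed.

Lemma qform_ptrace1 H y : qform (ptrace1 H) y = \sum_j qform H (blkemb j y).
Proof.
rewrite qformE (eq_bigr (fun a => \sum_j \sum_b y 0 a * H (blk j a) (blk j b) * (y 0 b)^*)).
  by rewrite exchange_big; apply: eq_bigr => j _; rewrite qform_blkemb.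
move=> a _; rewrite exchange_big; apply: eq_bigr => b _.
by rewrite mxE mulr_sumr mulr_suml.
Qed.

Hypothesis k_gt0 : (0 < k)%N.

Lemma det_tens1mx T : \det (blkdiag T) = \det T ^+ n.
Proof.
have [P P_unitary P_trig] := Schur T k_gt0.
have P_unit := unitarymx_unit P_unitary.
have [U U_trig ->] : exists2 U, is_trig_mx U & T = invmx P *m U *m P.
  by exists (conjmx P T); rewrite // conjumx // !mulmxA mulVmx // mul1mx mulmxKV.
have PiP : blkdiag (invmx P) *m blkdiag P = 1%:M by rewrite tens1mxM mulVmx ?tens1mx1.
rewrite -!tens1mxM !det_similar ?mulVmx //.
have UI_trig : is_trig_mx (blkdiag U).
  apply/is_trig_mxP => l l'; case: (mxtens_indexP l) => i a; case: (mxtens_indexP l') => j b.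
  rewrite tensmxE mxE /=; have [<- lt_ab|] := eqVneq i j; last by rewrite mul0r.
  by rewrite (is_trig_mxP U_trig) ?mulr0 // -(ltn_add2l (i * k)).
rewrite !det_trig // big_blk -[in RHS](card_ord n) -prodr_const; apply: eq_bigr => i _.
by apply: eq_bigr => a _; rewrite tens1mxE eqxx mul1r.
Qed.

End PartialTrace.

Unset Implicit Arguments.

Theorem theorem3p5 (C : numClosedFieldType) (n k : nat) (c s : C)
  (H : 'M[C]_(n * k)) :
  angle_cs c s ->
  (forall z, numrange H z -> sector c s z) ->
  c ^+ (n * k) * `|\det H| <= `|\det (ptrace1 H) / (n ^ k)%:R| ^+ n.
Proof.
move=> cs_angle WH.
have [n0|n_gt0] := posnP n.
  by subst n; rewrite expr0 [in c ^+ _]mul0n expr0 mul1r det_dim0 ?normr1.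
have [k0|k_gt0] := posnP k.
  subst k; rewrite [in c ^+ _]muln0 expr0 mul1r det_dim0 ?muln0 //.
  by rewrite det_mx00 expn0 divr1 normr1 expr1n.
set G := n%:R^-1 *: ptrace1 H; set T := hermpart G.
have n_neq0 : n%:R != 0 :> C by rewrite pnatr_eq0 -lt0n.
have secH u : u != 0 -> sector c s (qform H u) := sector_qform WH.
have posT : posdef T.
  move=> y y0; rewrite qform_hermpart qformZ qform_ptrace1.
  suff [] : sector c s (n%:R^-1 * \sum_j qform H (blkemb j y)) by [].
  apply: sector_scale; first by rewrite invr_gt0 ltr0n.
  by apply: (sector_sum cs_angle n_gt0) => j; apply/secH/blkemb_neq0.
have ReTrE : 'Re (\tr (invmx (1%:M *t T) *m H)) = (n * k)%:R.
  rewrite invmx_tens1mx ?posdef_unitmx // mxtrace_tens1mxM.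
  have -> : ptrace1 H = n%:R *: G by rewrite scalerA mulfV ?scale1r.
  by rewrite -scalemxAr mxtraceZ ReMl ?realn // Re_mxtrace_hermpart // natrM.
apply: le_trans (posdef_det_sector_le cs_angle (posdef_tens1mx posT) secH) _.
rewrite ReTrE divff ?pnatr_eq0 -?lt0n ?muln_gt0 ?n_gt0 // expr1n mulr1 det_tens1mx //.
have -> : \det (ptrace1 H) / (n ^ k)%:R = \det G by rewrite detZ natrX exprVn mulrC.
by rewrite normrX lerXn2r ?nnegrE ?normr_ge0 ?norm_det_hermpart_le.
Qed.
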